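(* Let $X$ be convex and let $f$ be $\alpha$-robustly quasiconvex for some $\alpha>0$, with $X\subset\operatorname{dom}f$. If $X^\infty\cap\mathcal{K}_q(f)=\{0\}$, then the optimal value function $\mu$ is continuous at $0$.
   Context: Standing assumptions: $f:\mathbb{R}^n\to\mathbb{R}\cup\{\pm\infty\}$ is proper (never $-\infty$ and finite at some point) and lower semicontinuous; $X\subset\mathbb{R}^n$ is a nonempty closed set with $\operatorname{dom}f\cap X$ unbounded. $f$ is $\alpha$-robustly quasiconvex ($\alpha\ge0$) if $x\mapsto f(x)+\langle u,x\rangle$ is quasiconvex for every $u$ in the open ball $\mathbb{B}_\alpha$ of radius $\alpha$ about $0$ (quasiconvex: $g(\lambda x+(1-\lambda)y)\le\max\{g(x),g(y)\}$ for $x,y\in\operatorname{dom}g$, $\lambda\in[0,1]$). $X^\infty=\{u:\exists t_k\to+\infty,\ \exists x_k\in X,\ x_k/t_k\to u\}$. $f^\infty_q(u)=\sup_{x\in\operatorname{dom}f}\sup_{t>0}\frac{f(x+tu)-f(x)}{t}$, $\mathcal{K}_q(f)=\{d: f^\infty_q(d)\le0\}$. $f_u(x)=f(x)-\langle u,x\rangle$ and $\mu(u)=\inf_{x\in X}f_u(x)$; continuity of $\mu$ at $0$ means $\lim_{u\to0}\mu(u)=\mu(0)$. *)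

From HB Require Import structures.
From mathcomp Require Import all_boot all_order all_algebra.
From mathcomp Require Import all_classical all_reals all_analysis.
Set Implicit Arguments. Unset Strict Implicit. Unset Printing Implicit Defensive.
Import Order.TTheory GRing.Theory Num.Theory.
Import numFieldNormedType.Exports.
Local Open Scope classical_set_scope.
Local Open Scope ring_scope.

(* Vectors of R^n are row vectors 'rV[R]_n (with the library's product topology). *)
Definition inner {R : realType} {n : nat} (u x : 'rV[R]_n) : R :=
  \sum_(i < n) u 0 i * x 0 i.

Definition enorm {R : realType} {n : nat} (u : 'rV[R]_n) : R :=
  Num.sqrt (inner u u).

Definition dom {R : realType} {n : nat} (f : 'rV[R]_n -> \bar R) : set 'rV[R]_n :=
  [set x | (f x < +oo)%E].

Definition proper_fun {R : realType} {n : nat} (f : 'rV[R]_n -> \bar R) : Prop :=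
  (forall x, f x <> -oo%E) /\ (exists x, f x \is a fin_num).

Definition lsc {R : realType} {n : nat} (f : 'rV[R]_n -> \bar R) : Prop :=
  forall x (a : R), (a%:E < f x)%E -> \forall y \near x, (a%:E < f y)%E.

Definition convex_set_ {R : realType} {n : nat} (X : set 'rV[R]_n) : Prop :=
  forall x y (l : R), X x -> X y -> 0 <= l <= 1 -> X (l *: x + (1 - l) *: y).

Definition quasiconvex {R : realType} {n : nat} (g : 'rV[R]_n -> \bar R) : Prop :=
  forall x y (l : R), dom g x -> dom g y -> 0 <= l <= 1 ->
    (g (l *: x + (1 - l) *: y)%R <= maxe (g x) (g y))%E.

Definition robustly_quasiconvex {R : realType} {n : nat} (alpha : R)
    (f : 'rV[R]_n -> \bar R) : Prop :=
  forall u : 'rV[R]_n, enorm u < alpha ->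
    quasiconvex (fun x => (f x + (inner u x)%:E)%E).

Definition asymp_cone {R : realType} {n : nat} (X : set 'rV[R]_n) : set 'rV[R]_n :=
  [set u | exists (t : nat -> R) (x : nat -> 'rV[R]_n),
     t @ \oo --> +oo /\ (forall k, X (x k)) /\
     (fun k => (t k)^-1 *: x k) @ \oo --> u].

Definition q_asymp {R : realType} {n : nat} (f : 'rV[R]_n -> \bar R) (u : 'rV[R]_n)
  : \bar R :=
  ereal_sup [set ((f (x + t *: u)%R - f x) * (t^-1)%:E)%E
            | x in dom f & t in [set t : R | 0 < t]] .

Definition Kq {R : realType} {n : nat} (f : 'rV[R]_n -> \bar R) : set 'rV[R]_n :=
  [set d | (q_asymp f d <= 0)%E].

Definition mu {R : realType} {n : nat} (f : 'rV[R]_n -> \bar R) (X : set 'rV[R]_n)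
  (u : 'rV[R]_n) : \bar R :=
  ereal_inf [set (f x - (inner u x)%:E)%E | x in X].

Definition unbounded {R : realType} {n : nat} (A : set 'rV[R]_n) : Prop :=
  forall M : R, exists x, A x /\ M < enorm x.

From HB Require Import structures.
From mathcomp Require Import all_boot all_order all_algebra.
From mathcomp Require Import all_classical all_reals all_analysis.
Import Order.TTheory GRing.Theory Num.Theory.
Import numFieldNormedType.Exports.
Local Open Scope classical_set_scope.
Local Open Scope ring_scope.
From mathcomp.algebra_tactics Require Import ring lra.

(* The optimal value mu is an infimum of functions affine in u, so it is upper
   semicontinuous at 0 for free; the content is the lower bound.  If it failed,
   there would be u_k -> 0 and x_k in X with |x_k| -> +oo and f x_k - <u_k, x_k>
   bounded above.  A cluster point d of x_k / |x_k| lies in X^oo.  For y in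
   dom f, quasiconvexity of f - <u_k, .> on the segments [y, x_k] together with
   lower semicontinuity bounds f on the ray y + R_+ d, and robust
   quasiconvexity (tilting f by a small multiple of <d, .>) forces a bounded ray
   to be nonincreasing, so d is a nonzero element of K_q(f). *)

Section InnerProduct.
Context {R : realType} {n : nat}.
Local Notation V := 'rV[R]_n.
Implicit Types (u x y : V) (a : R).

Lemma normr_inner_le u x : `|inner u x| <= n%:R * (`|u| * `|x|).
Proof.
have entry_le (v : V) i : `|v 0 i| <= `|v|.
  by rewrite [leRHS]/Num.norm /= mx_normrE; apply: (le_bigmax _ _ (ord0, i)).
apply: (le_trans (ler_norm_sum _ _ _)).
apply: (@le_trans _ _ (\sum_(i < n) (`|u| * `|x|))).
  by apply: ler_sum => i _; rewrite normrM ler_pM ?entry_le.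
by rewrite sumr_const card_ord mulr_natl.
Qed.

Lemma innerDr u x y : inner u (x + y) = inner u x + inner u y.
Proof. by rewrite /inner -big_split; apply: eq_bigr => i _; rewrite mxE mulrDr. Qed.

Lemma innerZr u x a : inner u (a *: x) = a * inner u x.
Proof. by rewrite /inner mulr_sumr; apply: eq_bigr => i _; rewrite mxE mulrCA. Qed.

Lemma innerZl u x a : inner (a *: u) x = a * inner u x.
Proof. by rewrite /inner mulr_sumr; apply: eq_bigr => i _; rewrite mxE mulrA. Qed.

Lemma innerNl u x : inner (- u) x = - inner u x.
Proof. by rewrite -scaleN1r innerZl mulN1r. Qed.

Lemma inner0l x : inner 0 x = 0.
Proof. by rewrite -(scale0r 0) innerZl mul0r. Qed.

Lemma inner_gt0 u : u != 0 -> 0 < inner u u.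
Proof.
move=> u0; have [i ui] : exists i, u 0 i != 0.
  apply/existsP; apply: contraR u0 => /existsPn u0; apply/eqP/rowP => i.
  by rewrite mxE; apply/eqP; move: (u0 i); rewrite negbK.
rewrite /inner (bigD1 i) //= ltr_pwDl ?sumr_ge0 // => [|j _].
  by rewrite -expr2 lt_neqAle sqr_ge0 andbT eq_sym sqrf_eq0.
by rewrite -expr2 sqr_ge0.
Qed.

Lemma enormZ u a : enorm (a *: u) = `|a| * enorm u.
Proof.
by rewrite /enorm innerZl innerZr mulrA -expr2 sqrtrM ?sqr_ge0 // sqrtr_sqr.
Qed.

Lemma enormN u : enorm (- u) = enorm u.
Proof. by rewrite -scaleN1r enormZ normrN1 mul1r. Qed.

Lemma enorm_le u : enorm u <= Num.sqrt n%:R * `|u|.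
Proof.
have -> : `|u| = Num.sqrt (`|u| ^+ 2) by rewrite sqrtr_sqr normr_id.
rewrite -sqrtrM // ler_sqrt ?mulr_ge0 // expr2.
exact: le_trans (ler_norm _) (normr_inner_le u u).
Qed.

Lemma near0_enorm_lt {alpha : R} : 0 < alpha ->
  \forall u \near (0 : V), enorm u < alpha.
Proof.
move=> alpha_gt0; apply/nbhs_normP.
have sqrtn1_gt0 : 0 < Num.sqrt n%:R + 1 :> R by rewrite ltr_wpDl.
exists (alpha / (Num.sqrt n%:R + 1)) => [|u /=]; first exact: divr_gt0.
rewrite sub0r normrN ltr_pdivlMr // => u_lt.
apply: le_lt_trans (enorm_le u) _; apply: le_lt_trans u_lt.
by rewrite mulrC ler_wpM2l ?lerDl.
Qed.

Lemma cvg_inner0 {T : Type} {F : set_system T} {FF : Filter F}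
    {u z : T -> V} {z0 : V} :
  u @ F --> (0 : V) -> z @ F --> z0 -> inner (u t) (z t) @[t --> F] --> 0.
Proof.
move=> u0 zz0; apply/norm_cvg0P.
have bound_cvg : n%:R * (`|u t| * `|z t|) @[t --> F] --> 0.
  rewrite -(mulr0 n%:R) -(mul0r `|z0|); apply: cvgMl_tmp; apply: cvgM.
    by rewrite -(@normr0 _ V); apply: cvg_norm.
  exact: cvg_norm.
apply: (squeeze_cvgr _ (cvg_cst 0) bound_cvg).
by near=> t; rewrite normr_ge0 normr_inner_le.
Unshelve. all: by end_near.
Qed.

End InnerProduct.

Lemma lsc_cvg_le {R : realType} {n : nat} {f : 'rV[R]_n -> \bar R}
    {T : Type} {F : set_system T} {PF : ProperFilter F}
    {z : T -> 'rV[R]_n} {z0 : 'rV[R]_n} {b : T -> R} {M : R} :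
  lsc f -> z @ F --> z0 -> b @ F --> M ->
  (\forall t \near F, f (z t) <= (b t)%:E)%E -> (f z0 <= M%:E)%E.
Proof.
move=> f_lsc zz0 bM f_le; rewrite leNgt; apply/negP => Mf.
have [a Ma af] : exists2 a : R, M < a & (a%:E < f z0)%E.
  case: (f z0) Mf => [r | _ | //]; last by exists (M + 1); [lra | rewrite ltry].
  by rewrite lte_fin => Mr; exists ((M + r) / 2); rewrite ?lte_fin; lra.
have f_gt : \forall t \near F, (a%:E < f (z t))%E := zz0 _ (f_lsc z0 a af).
have b_lt : \forall t \near F, b t < a by exact: cvgr_lt M bM _ Ma.
have [t [fzb [azt bta]]] := filter_ex (filterI f_le (filterI f_gt b_lt)).
by have := lt_le_trans azt fzb; rewrite lte_fin ltNge ltW.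
Qed.

Section RobustQuasiconvexity.
Context {R : realType} {n : nat} {f : 'rV[R]_n -> \bar R} {alpha : R}.
Local Notation V := 'rV[R]_n.
Hypotheses (f_neqNy : forall x, f x != -oo%E) (alpha_gt0 : 0 < alpha)
  (f_rqc : robustly_quasiconvex alpha f) (f_lsc : lsc f).

Lemma dom_fin_num {x : V} : dom f x -> f x \is a fin_num.
Proof. by rewrite /dom /= fin_numE f_neqNy ltey. Qed.

Lemma rqc_le_max {u x y : V} {l : R} :
  enorm u < alpha -> dom f x -> dom f y -> 0 <= l <= 1 ->
  (f (l *: x + (1 - l) *: y) - (inner u (l *: x + (1 - l) *: y))%:E <=
    maxe (f x - (inner u x)%:E) (f y - (inner u y)%:E))%E.
Proof.
move=> u_lt dx dy l01; have := f_rqc (- u); rewrite enormN => /(_ u_lt x y l).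
by rewrite /dom /= !innerNl !EFinN; apply => //; apply: lte_add_pinfty;
  rewrite // -EFinN ltry.
Qed.

Lemma ray_tilt_le {y d : V} {s t T a b c : R} :
  enorm (s *: d) < alpha -> 0 < t <= T ->
  f y = a%:E -> f (y + t *: d) = b%:E -> f (y + T *: d) = c%:E ->
  b - s * t * inner d d <= Num.max (c - s * T * inner d d) a.
Proof.
move=> s_lt /andP[t_gt0 tT] fy fz fx.
have T_gt0 : 0 < T := lt_le_trans t_gt0 tT.
pose l := t / T.
have l01 : 0 <= l <= 1.
  by rewrite /l divr_ge0 ?(ltW t_gt0) ?(ltW T_gt0) //= ler_pdivrMr // mul1r.
have zE : l *: (y + T *: d) + (1 - l) *: y = y + t *: d.
  rewrite scalerDr scalerBl scale1r scalerA addrC addrA subrK.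
  by rewrite /l divfK // gt_eqF.
have dom_real (v : V) (r : R) : f v = r%:E -> dom f v.
  by rewrite /dom /= => ->; apply: ltry.
have := rqc_le_max s_lt (dom_real _ _ fx) (dom_real _ _ fy) l01.
rewrite zE fy fz fx -!EFinB -EFin_max lee_fin le_max.
rewrite !innerZl !innerDr !innerZr /=.
by case/orP => H; rewrite le_max; apply/orP; [left|right]; nra.
Qed.

Lemma bounded_ray_le (y d : V) (B : R) : dom f y ->
  (forall t, 0 < t -> (f (y + t *: d) <= B%:E)%E) ->
  forall t, 0 < t -> (f (y + t *: d) <= f y)%E.
Proof.
move=> dy f_le t0 t0_gt0.
(* Tilting f by s <d, .> with s > 0 small keeps it quasiconvex along the ray;
   if f rose between y and y + t0 d, the tilted value at t0 would exceed both
   endpoint values for T large. *)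
have [->|d_neq0] := eqVneq d 0; first by rewrite scaler0 addr0.
have fin_ray t : 0 < t -> f (y + t *: d) = (fine (f (y + t *: d)))%:E.
  move=> t_gt0; rewrite fineK // fin_numE f_neqNy /=.
  by apply: contraTN (f_le t t_gt0) => /eqP ->; rewrite leye_eq.
rewrite leNgt; apply/negP.
rewrite -(fineK (dom_fin_num dy)) (fin_ray _ t0_gt0) lte_fin.
set a := fine (f y); set b := fine (f (y + t0 *: d)) => ab.
set D := inner d d; have D_gt0 : 0 < D by exact: inner_gt0.
have enorm_gt0 : 0 < enorm d by rewrite sqrtr_gt0.
have bB : b <= B by rewrite -lee_fin -fin_ray // f_le.
set m := Num.min ((b - a) / (t0 * D)) (alpha / enorm d).
have m_gt0 : 0 < m by rewrite lt_min !divr_gt0 ?subr_gt0 ?mulr_gt0.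
have m_le1 : m <= (b - a) / (t0 * D) by rewrite ge_min lexx.
have m_le2 : m <= alpha / enorm d by rewrite ge_min lexx orbT.
pose s := m / 2.
have s_gt0 : 0 < s by rewrite divr_gt0.
have s_gap : s * t0 * D < b - a.
  by rewrite -mulrA -ltr_pdivlMr ?mulr_gt0 // /s; lra.
have s_lt : enorm (s *: d) < alpha.
  by rewrite enormZ gtr0_norm // -ltr_pdivlMr // /s; lra.
pose T := t0 + (B - b + 1) / (s * D).
have tilt_T : s * T * D = s * t0 * D + (B - b + 1).
  by rewrite /T; field; rewrite !gt_eqF.
have t0T : 0 < t0 <= T by rewrite t0_gt0 lerDl divr_ge0 ?mulr_ge0 // ?ltW; lra.
have T_gt0 : 0 < T by case/andP: t0T => /lt_le_trans; apply.
have := ray_tilt_le s_lt t0T (esym (fineK (dom_fin_num dy))) (fin_ray _ t0_gt0)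
  (fin_ray _ T_gt0).
have cB : fine (f (y + T *: d)) <= B by rewrite -lee_fin -fin_ray // f_le.
rewrite -/a -/b -/D tilt_T le_max; case/orP; lra.
Qed.

Lemma Kq_of_bounded_rays (d : V) :
  (forall y, dom f y ->
    exists B : R, forall t, 0 < t -> (f (y + t *: d) <= B%:E)%E) ->
  Kq f d.
Proof.
move=> bounded; apply/ereal_supP => _ [y dy [t t_gt0 <-]].
have [B f_le] := bounded y dy.
apply: mule_le0_ge0; last by rewrite lee_fin invr_ge0 ltW.
by rewrite sube_le0; apply: bounded_ray_le f_le t t_gt0.
Qed.

Lemma segment_le_max (u x y : V) (l c : R) :
  enorm u < alpha -> dom f x -> dom f y -> 0 <= l <= 1 ->
  (f x - (inner u x)%:E <= c%:E)%E ->
  let z := l *: x + (1 - l) *: y in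
  (f z <= (Num.max (fine (f y)) c + (`|inner u y| + `|inner u z|))%:E)%E.
Proof.
move=> u_lt dx dy l01 fx_le /=; set z := l *: x + _.
have := rqc_le_max u_lt dx dy l01; rewrite -/z -(fineK (dom_fin_num dy)).
set a := fine (f y); set iy := inner u y; set iz := inner u z.
move=> /le_trans /(_ (le_max2 fx_le (lexx _))).
have -> : maxe c%:E (a%:E - iy%:E)%E = (Num.max c (a - iy))%:E.
  by rewrite -EFinB -EFin_max.
rewrite lee_subel_addr // -EFinD => /le_trans; apply; rewrite lee_fin /=.
rewrite addrA lerD ?ler_norm // ge_max; apply/andP; split.
  by rewrite ler_wpDr // le_max lexx orbT.
by rewrite lerD ?le_max ?lexx // -normrN ler_norm.
Qed.

Lemma escaping_ray_le {xs us : nat -> V} {d : V} {c : R} :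
  us @ \oo --> (0 : V) -> `|xs k| @[k --> \oo] --> +oo ->
  `|xs k|^-1 *: xs k @[k --> \oo] --> d ->
  (forall k, dom f (xs k)) ->
  (forall k, (f (xs k) - (inner (us k) (xs k))%:E <= c%:E)%E) ->
  forall y t, dom f y -> 0 < t ->
    (f (y + t *: d) <= (Num.max (fine (f y)) c)%:E)%E.
Proof.
move=> us0 xs_oo w_d dxs fxs_le y t dy t_gt0.
(* Quasiconvexity bounds f at the points z k of the segments [y, xs k]; these
   converge to y + t d, where lower semicontinuity keeps the bound. *)
pose l k := t / `|xs k|.
pose z k := l k *: xs k + (1 - l k) *: y.
have xs_ge : \forall k \near \oo, t <= `|xs k| by move/cvgryPge : xs_oo; apply.
have l01 : \forall k \near \oo, 0 <= l k <= 1.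
  near=> k; have tx : t <= `|xs k| by near: k.
  have x_gt0 := lt_le_trans t_gt0 tx.
  by rewrite /l divr_ge0 ?(ltW t_gt0) ?(ltW x_gt0) //= ler_pdivrMr // mul1r.
have l0 : l @ \oo --> 0.
  rewrite -(mulr0 t); apply: cvgMl_tmp; apply/gtr0_cvgV0 => //.
  by near=> k; apply: lt_le_trans t_gt0 _; near: k.
have z_cvg : z @ \oo --> y + t *: d.
  have -> : z = fun k => t *: (`|xs k|^-1 *: xs k) + (y - l k *: y).
    by apply/funext => k; rewrite /z scalerA scalerBl scale1r addrA.
  rewrite -[y + _]addrC -[X in _ + X](subr0 y) -[X in y - X](scale0r y).
  apply: cvgD; first exact: cvgZ (cvg_cst _) w_d.
  exact: cvgB (cvg_cst _) (cvgZ l0 (cvg_cst _)).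
pose b k := Num.max (fine (f y)) c + (`|inner (us k) y| + `|inner (us k) (z k)|).
apply: (lsc_cvg_le (b := b) f_lsc z_cvg).
  rewrite -[X in _ --> X]addr0; apply: cvgD (cvg_cst _) _.
  rewrite -[X in _ --> X]addr0 -(@normr0 _ R); apply: cvgD; apply: cvg_norm.
    by apply: cvg_inner0 us0 (cvg_cst y).
  exact: cvg_inner0 us0 z_cvg.
have u_lt : \forall k \near \oo, enorm (us k) < alpha :=
  us0 _ (near0_enorm_lt alpha_gt0).
near=> k; apply: segment_le_max (dxs k) dy _ (fxs_le k); near: k.
  exact: u_lt.
exact: l01.
Unshelve. all: by end_near.
Qed.

End RobustQuasiconvexity.

Section AsymptoticDirections.
Context {R : realType} {n : nat}.
Local Notation V := 'rV[R]_n.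

Lemma unit_seq_cvg_subseq {w : nat -> V} : (forall k, `|w k| = 1) ->
  exists d (js : nat -> nat),
    [/\ `|d| = 1, forall k, (k <= js k)%N & w (js k) @[k --> \oo] --> d].
Proof.
move=> w1.
have ball_compact : compact (closed_ball (0 : V) 1).
  apply: bounded_closed_compact; last exact: closed_ball_closed.
  exists 1; split; first exact: num_real.
  move=> M M_gt1 x /=; rewrite closed_ballE // /closed_ball_ /= sub0r normrN => x1.
  exact: le_trans x1 (ltW M_gt1).
have [d [_ d_cluster]] : (closed_ball (0 : V) 1 `&` cluster (w @ \oo)) !=set0.
  apply: ball_compact; exists 0%N => // k _ /=.
  by rewrite closed_ballE // /closed_ball_ /= sub0r normrN w1.
have close k : exists j, (k <= j)%N /\ `|d - w j| < k.+1%:R^-1.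
  have [] := d_cluster (w @` [set j | (k <= j)%N]) (ball d k.+1%:R^-1).
  - by exists k => // j /= kj; exists j.
  - by apply: nbhsx_ballx; rewrite invr_gt0.
  by move=> _ [[j kj <-]]; rewrite -ball_normE; exists j.
have [js js_close] := choice close.
have w_d : w (js k) @[k --> \oo] --> d.
  apply/cvgrPdist_lt => eps eps_gt0.
  apply: filterS (near_infty_natSinv_lt (PosNum eps_gt0)) => k k_lt.
  by case: (js_close k) => _ /lt_trans; apply.
exists d, js; split => [|k|//]; last by case: (js_close k).
apply: (norm_cvg_unique (cvg_norm w_d)).
have -> : (fun k => `|w (js k)|) = fun=> 1 by apply/funext => k; rewrite w1.
exact: cvg_cst.
Qed.

Lemma asymp_cone_escaping (X : set V) (xs : nat -> V) (d : V) :
  (forall k, X (xs k)) -> `|xs k| @[k --> \oo] --> +oo ->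
  `|xs k|^-1 *: xs k @[k --> \oo] --> d -> asymp_cone X d.
Proof. by move=> Xxs xs_oo w_d; exists (fun k => `|xs k|), xs. Qed.

End AsymptoticDirections.

Lemma cvge_between {R : realType} {T : Type} {F : set_system T} {PF : ProperFilter F}
    (g : T -> \bar R) (l : \bar R) :
  (forall a : R, (a%:E < l)%E -> \forall t \near F, (a%:E < g t)%E) ->
  (forall b : R, (l < b%:E)%E -> \forall t \near F, (g t < b%:E)%E) ->
  g @ F --> l.
Proof.
case: l => [r | | ] above below.
- have near_r eps : 0 < eps ->
      \forall t \near F, ((r - eps)%:E < g t < (r + eps)%:E)%E.
    move=> eps_gt0; apply: filterS (filterI (above (r - eps) _) (below (r + eps) _)).
    + by move=> t [-> ->].
    + by rewrite lte_fin; lra.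
    + by rewrite lte_fin; lra.
  apply/fine_cvgP; split.
    apply: filterS (near_r 1 ltr01) => t /andP[lo hi].
    by rewrite fin_numElt (lt_trans (ltNyr _) lo) (lt_trans hi (ltry _)).
  apply/cvgrPdist_lt => eps eps_gt0; apply: filterS (near_r eps eps_gt0) => t /=.
  case: (g t) => [s | | ] /andP[]; rewrite ?lte_fin //= => lo hi.
  by rewrite ltr_distlC; apply/andP; split; lra.
- by apply/cvgeyPgt => A; apply: above; rewrite ltry.
- by apply/cvgeNyPlt => A; apply: below; rewrite ltNyr.
Qed.

Section OptimalValue.
Context {R : realType} {n : nat}.
Local Notation V := 'rV[R]_n.
Context {f : V -> \bar R} {X : set V}.

Lemma mu_le_tilted (u : V) {x : V} : X x -> (mu f X u <= f x - (inner u x)%:E)%E.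
Proof. by move=> Xx; apply: ereal_inf_lbound; exists x. Qed.

Lemma near0_mu_lt (b : R) : (mu f X 0 < b%:E)%E ->
  \forall u \near (0 : V), (mu f X u < b%:E)%E.
Proof.
case/ereal_inf_ltP => _ [x Xx <-]; rewrite inner0l sube0.
case E : (f x) => [r | | ] //= fx_lt; last first.
  by near=> u; apply: le_lt_trans (mu_le_tilted u Xx) _; rewrite E ltNyr.
move: fx_lt; rewrite lte_fin => rb.
have inner0 : inner u x @[u --> (0 : V)] --> 0.
  exact: (cvg_inner0 (F := nbhs (0 : V)) cvg_id (cvg_cst x)).
have inner_small : \forall u \near (0 : V), `|inner u x| < b - r.
  by apply: (cvgr0_norm_lt _ inner0); rewrite subr_gt0.
near=> u; apply: le_lt_trans (mu_le_tilted u Xx) _.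
have : `|inner u x| < b - r by near: u.
by rewrite E -EFinB lte_fin; have := ler_norm (- inner u x); rewrite normrN; lra.
Unshelve. all: by end_near.
Qed.

End OptimalValue.

Section Coercivity.
Context {R : realType} {n : nat}.
Local Notation V := 'rV[R]_n.
Context {f : V -> \bar R} {X : set V} {alpha : R}.
Hypotheses (f_neqNy : forall x, f x != -oo%E) (alpha_gt0 : 0 < alpha)
  (f_rqc : robustly_quasiconvex alpha f) (f_lsc : lsc f) (X_dom : X `<=` dom f)
  (cone_Kq : asymp_cone X `&` Kq f = [set 0]).

Lemma tilted_coercive (c : R) : exists2 r : R, 0 < r & exists K : R,
  forall u x, `|u| < r -> X x -> K < `|x| -> (c%:E <= f x - (inner u x)%:E)%E.
Proof.
apply: contrapT => not_coercive.
have bad k : exists p : V * V, [/\ `|p.1| < k.+1%:R^-1, X p.2, k.+1%:R < `|p.2| &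
    (f p.2 - (inner p.1 p.2)%:E < c%:E)%E].
  apply: contrapT => none; apply: not_coercive.
  exists k.+1%:R^-1; first by rewrite invr_gt0.
  exists k.+1%:R => u x u_lt Xx x_gt; rewrite leNgt; apply/negP => fx_lt.
  by apply: none; exists (u, x).
have [p p_bad] := choice bad.
pose us k := (p k).1; pose xs k := (p k).2.
have xs_gt k : k.+1%:R < `|xs k| by case: (p_bad k).
have w1 k : `|(`|xs k|^-1 *: xs k)| = 1.
  have xs_gt0 : 0 < `|xs k| by apply: lt_trans (xs_gt k); rewrite ltr0n.
  by rewrite normrZ normfV normr_id mulVf // gt_eqF.
have [d [js [d1 js_ge w_d]]] := unit_seq_cvg_subseq w1.
have us0 : us (js k) @[k --> \oo] --> (0 : V).
  apply/cvgr0Pnorm_lt => eps eps_gt0.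
  apply: filterS (near_infty_natSinv_lt (PosNum eps_gt0)) => k /=.
  apply: le_lt_trans; case: (p_bad (js k)) => us_lt _ _ _.
  by apply: ltW (lt_le_trans us_lt _); rewrite lef_pV2 ?posrE ?ltr0n // ler_nat ltnS.
have xs_oo : `|xs (js k)| @[k --> \oo] --> +oo.
  apply/cvgryPge => A; apply: filterS (nbhs_infty_ger A) => k /= /le_trans; apply.
  by apply: ltW; apply: le_lt_trans (xs_gt (js k)); rewrite ler_nat leqW.
have d_cone : asymp_cone X d.
  by apply: asymp_cone_escaping w_d => // k; case: (p_bad (js k)).
have d_Kq : Kq f d.
  apply: (Kq_of_bounded_rays f_neqNy alpha_gt0 f_rqc) => y dy.
  exists (Num.max (fine (f y)) c) => t.
  apply: (escaping_ray_le f_neqNy alpha_gt0 f_rqc f_lsc us0 xs_oo w_d _ _ y t dy)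
    => k.
    by apply: X_dom; case: (p_bad (js k)).
  by apply: ltW; case: (p_bad (js k)).
have : (asymp_cone X `&` Kq f) d by [].
rewrite cone_Kq => /= d0; move: d1; rewrite d0 normr0.
by apply/eqP; rewrite eq_sym oner_eq0.
Qed.

Lemma near0_mu_gt (a : R) : (a%:E < mu f X 0)%E ->
  \forall u \near (0 : V), (a%:E < mu f X u)%E.
Proof.
move=> a_lt.
have [m am m_le] : exists2 m : R, a < m & (m%:E <= mu f X 0)%E.
  case: (mu f X 0) a_lt => [r | | ] //=; rewrite ?lte_fin => ar.
    by exists r.
  by exists (a + 1); [lra | rewrite leey].
pose c := (a + m) / 2.
have [r r_gt0 [K far_ge]] := tilted_coercive c.
have u_small : \forall u \near (0 : V), `|u| < r.
  by apply/nbhs_normP; exists r => // u /=; rewrite sub0r normrN.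
have bound_small : \forall u \near (0 : V), n%:R * (`|u| * `|K|) < (m - a) / 2.
  have : n%:R * (`|u| * `|K|) @[u --> (0 : V)] --> 0.
    rewrite -(mulr0 n%:R) -(mul0r `|K|) -(@normr0 _ V).
    exact: (cvgMl_tmp (F := nbhs (0 : V)) (cvgMr_tmp (cvg_norm cvg_id))).
  by move/cvgr_lt; apply; lra.
near=> u; apply: (@lt_le_trans _ _ c%:E); first by rewrite lte_fin /c; lra.
apply/ereal_infP => _ [x Xx <-].
have [x_far | x_near] := ltP K `|x|; first by apply: far_ge => //; near: u.
have m_fx : (m%:E <= f x)%E.
  by apply: le_trans m_le (le_trans (mu_le_tilted 0 Xx) _); rewrite inner0l sube0.
apply: le_trans (leeB m_fx (lexx _)); rewrite -EFinB lee_fin.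
have : `|inner u x| <= n%:R * (`|u| * `|K|).
  apply: le_trans (normr_inner_le u x) _.
  by rewrite ler_wpM2l // ler_wpM2l // (le_trans x_near) // ler_norm.
have : n%:R * (`|u| * `|K|) < (m - a) / 2 by near: u.
by have := ler_norm (inner u x); rewrite /c; lra.
Unshelve. all: by end_near.
Qed.

End Coercivity.

Theorem mainTheorem14 (R : realType) (n : nat) (f : 'rV[R]_n -> \bar R)
  (X : set 'rV[R]_n) (alpha : R) :
  proper_fun f -> lsc f ->
  X !=set0 -> closed X -> unbounded (dom f `&` X) ->
  convex_set_ X ->
  0 < alpha -> robustly_quasiconvex alpha f ->
  X `<=` dom f ->
  asymp_cone X `&` Kq f = [set 0] ->
  mu f X u @[u --> (0 : 'rV[R]_n)] --> mu f X 0.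
Proof.
move=> [f_notNy _] f_lsc _ _ _ _ alpha_gt0 f_rqc X_dom cone_Kq.
have f_neqNy x : f x != -oo%E by apply/eqP.
apply: (cvge_between (F := nbhs (0 : 'rV[R]_n))) => [a | b].
  exact: (near0_mu_gt f_neqNy alpha_gt0 f_rqc f_lsc X_dom cone_Kq).
exact: near0_mu_lt.
Qed.
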